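(* Let $G=(V,E)$ be a graph with maximum (undirected) degree $\Delta$ and arboricity $\alpha$, let $\mu$ be an orientation of its edges with out-degree at most $2\alpha$, and let $h\le\log\alpha$. Procedure Oriented Edge-Coloring$(G,\mu,h)$ computes a proper $(\Delta+3\cdot2^h)$-edge-coloring of $G$.
   Context: Logarithms are base 2. The arboricity of $G$ is $\max_{S\subseteq V,|S|\ge2}\lceil |E(G[S])|/(|S|-1)\rceil$. A proper $k$-edge-coloring is a map $\varphi:E\to\{1,\dots,k\}$ with distinct colors on distinct edges sharing an endpoint. An oriented degree-splitting of $(H,\mu)$ with discrepancy $\kappa$ is a partition $(E_1,E_2)$ of $E(H)$ such that for every vertex $v$, the numbers of incoming edges of $v$ in $E_1$ and in $E_2$ differ by at most $\kappa$, and likewise for outgoing edges. Procedure Oriented Edge-Coloring$(H,\mu,h)$: if $h=0$, return a proper $(\Delta(H)+1)$-edge-coloring of (the undirected) $H$ with palette $\{1,\dots,\Delta(H)+1\}$, computed by a base-case subroutine; otherwise compute an oriented degree-splitting $(E_1,E_2)$ of $(H,\mu)$ with discrepancy at most 1, let $H_1=(V,E_1)$, $H_2=(V,E_2)$ with orientation induced by $\mu$, compute $\varphi_1=$ Oriented Edge-Coloring$(H_1,\mu,h-1)$, $\varphi_2=$ Oriented Edge-Coloring$(H_2,\mu,h-1)$, and return $\varphi=\varphi_1$ on $E_1$ and $\varphi=p_1+\varphi_2$ on $E_2$, where $p_1$ is the palette size of $\varphi_1$. *)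

From mathcomp Require Import all_boot.
Set Implicit Arguments. Unset Strict Implicit. Unset Printing Implicit Defensive.

Section Defs.
Variable V : finType.

Definition simple_graph (G : rel V) := symmetric G /\ irreflexive G.

Definition edge_set (G : rel V) : {set {set V}} :=
  [set e : {set V} | [exists u, exists v, G u v && (e == [set u; v])]].

Definition ceil_div (m d : nat) : nat := (m + d.-1) %/ d.

Definition arboricity (G : rel V) : nat :=
  \max_(S : {set V} | 1 < #|S|)
     ceil_div #|[set e in edge_set G | e \subset S]| (#|S| - 1).

Definition max_degree (G : rel V) : nat := \max_(v : V) #|[set u | G v u]|.

Definition orientation_of (G mu : rel V) :=
  (forall u v, mu u v -> G u v) /\
  (forall u v, G u v -> mu u v || mu v u) /\
  (forall u v, mu u v -> ~~ mu v u).

Definition arcs (mu : rel V) : {set V * V} := [set a | mu a.1 a.2].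

(* ---- oriented subgraphs H = (V, A), A a set of arcs (orientation induced by mu) ---- *)
Definition indeg (A : {set V * V}) (v : V) : nat := #|[set a in A | a.2 == v]|.
Definition outdeg (A : {set V * V}) (v : V) : nat := #|[set a in A | a.1 == v]|.
Definition deg (A : {set V * V}) (v : V) : nat :=
  #|[set a in A | (a.1 == v) || (a.2 == v)]|.
Definition maxdeg (A : {set V * V}) : nat := \max_(v : V) deg A v.

Definition share_endpoint (a b : V * V) : bool :=
  [|| a.1 == b.1, a.1 == b.2, a.2 == b.1 | a.2 == b.2].

(* proper edge coloring of H (colors are nats; values off A are irrelevant) *)
Definition proper_coloring (A : {set V * V}) (phi : V * V -> nat) :=
  forall a b, a \in A -> b \in A -> a != b -> share_endpoint a b -> phi a != phi b.

Definition oriented_splitting (A E1 E2 : {set V * V}) (kappa : nat) :=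
  [/\ E1 :|: E2 = A, E1 :&: E2 = set0,
      forall v, indeg E1 v <= indeg E2 v + kappa /\ indeg E2 v <= indeg E1 v + kappa
    & forall v, outdeg E1 v <= outdeg E2 v + kappa /\ outdeg E2 v <= outdeg E1 v + kappa].

(* OEC A h phi p : "phi, with palette size p, is a possible output of
   Oriented Edge-Coloring(H, mu, h)", where H = (V, A), for any admissible
   behaviour of the splitting and base-case subroutines. *)
Inductive OEC : {set V * V} -> nat -> (V * V -> nat) -> nat -> Prop :=
| OEC_base (A : {set V * V}) (phi : V * V -> nat) :
    proper_coloring A phi ->
    (forall a, a \in A -> 1 <= phi a <= maxdeg A + 1) ->
    OEC A 0 phi (maxdeg A + 1)
| OEC_step (A E1 E2 : {set V * V}) (h : nat) (phi1 phi2 : V * V -> nat) (p1 p2 : nat) :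
    oriented_splitting A E1 E2 1 ->
    OEC E1 h phi1 p1 ->
    OEC E2 h phi2 p2 ->
    OEC A h.+1 (fun a => if a \in E1 then phi1 a else p1 + phi2 a) (p1 + p2).

End Defs.

From mathcomp Require Import all_boot zify.

Set Implicit Arguments.
Unset Strict Implicit.
Unset Printing Implicit Defensive.

(* Measure each vertex by [ceil(indeg / 2^h) + ceil(outdeg / 2^h)].  A split
   with discrepancy 1 halves indeg and outdeg up to rounding, and the rounding
   is absorbed by the ceiling, so the measure at depth [h] of both halves is at
   most the measure at depth [h+1] of the whole graph.  At depth 0 the measure
   bounds the degree, so by induction the palette has size at most
   [2^h * (K + 1)], where [K] bounds the measure of the input.  For the input
   graph [indeg + outdeg <= Delta], whence [K <= ceil(Delta / 2^h) + 1] and the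
   palette has fewer than [Delta + 3 * 2^h] colours.  The arboricity
   hypotheses only matter for the running time of the procedure; the colour
   bound holds for every orientation. *)

Section CeilDiv.
Variable d : nat.
Hypothesis d_gt0 : 0 < d.

Lemma leq_ceil_divLR m c : (ceil_div m d <= c) = (m <= c * d).
Proof. by rewrite /ceil_div -ltnS ltn_divLR //; lia. Qed.

Lemma leq_mul_ceil_div m : m <= ceil_div m d * d.
Proof. by rewrite -leq_ceil_divLR. Qed.

Lemma ltn_mul_ceil_div m : ceil_div m d * d < m + d.
Proof. by have := leq_divM (m + d.-1) d; rewrite -/(ceil_div m d); lia. Qed.

Lemma leq_ceil_div2r m n : m <= n -> ceil_div m d <= ceil_div n d.
Proof. by move=> le_mn; rewrite leq_ceil_divLR (leq_trans le_mn) ?leq_mul_ceil_div. Qed.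

Lemma ceil_divD_le m n : ceil_div m d + ceil_div n d <= (ceil_div (m + n) d).+1.
Proof.
rewrite -ltnS -(ltn_pmul2r d_gt0).
have := ltn_mul_ceil_div m; have := ltn_mul_ceil_div n.
have := leq_mul_ceil_div (m + n); lia.
Qed.

End CeilDiv.

Lemma ceil_divn1 m : ceil_div m 1 = m.
Proof. by rewrite /ceil_div addn0 divn1. Qed.

Lemma ceil_div_half_le d m n :
  0 < d -> m.*2 <= n.+1 -> ceil_div m d <= ceil_div n (2 * d).
Proof.
move=> d_gt0 le_m2n; have d2_gt0 : 0 < 2 * d by rewrite muln_gt0.
by have := leq_mul_ceil_div d2_gt0 n; rewrite leq_ceil_divLR //; lia.
Qed.

Lemma card_sep_partition (T : finType) (A E1 E2 : {set T}) (P : pred T) :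
  E1 :|: E2 = A -> E1 :&: E2 = set0 ->
  #|[set a in A | P a]| = #|[set a in E1 | P a]| + #|[set a in E2 | P a]|.
Proof.
move=> <- E12_0; rewrite -cardsUI.
have -> : [set a in E1 | P a] :&: [set a in E2 | P a] = set0.
  by apply/setP => a; rewrite !inE andbACA -in_setI E12_0 in_set0.
by rewrite cards0 addn0; apply: eq_card => a; rewrite !inE andb_orl.
Qed.

Lemma pow2_gt0 h : 0 < 2 ^ h.
Proof. by rewrite expn_gt0. Qed.

Section OrientedEdgeColoring.
Variable V : finType.
Implicit Types (A : {set V * V}) (v : V).

Definition ceil_degree A d v := ceil_div (indeg A v) d + ceil_div (outdeg A v) d.

Lemma deg_le_indeg_outdeg A v : deg A v <= indeg A v + outdeg A v.
Proof.
rewrite /deg /indeg /outdeg -cardsUI; apply: leq_trans (leq_addr _ _).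
by apply: subset_leq_card; apply/subsetP => a; rewrite !inE orbC -andb_orr.
Qed.

Lemma maxdeg_le_ceil_degree1 A K :
  (forall v, ceil_degree A 1 v <= K) -> maxdeg A <= K.
Proof.
move=> le_K; apply/bigmax_leqP => v _.
apply: leq_trans (deg_le_indeg_outdeg A v) _.
by have := le_K v; rewrite /ceil_degree !ceil_divn1.
Qed.

Lemma splitting_ceil_degree_le A E1 E2 d v :
  0 < d -> oriented_splitting A E1 E2 1 ->
  ceil_degree E1 d v <= ceil_degree A (2 * d) v /\
  ceil_degree E2 d v <= ceil_degree A (2 * d) v.
Proof.
move=> d_gt0 [E12_A E12_0 in_bal out_bal].
have := card_sep_partition (fun a => a.2 == v) E12_A E12_0.
have := card_sep_partition (fun a => a.1 == v) E12_A E12_0.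
rewrite -/(indeg A v) -/(indeg E1 v) -/(indeg E2 v).
rewrite -/(outdeg A v) -/(outdeg E1 v) -/(outdeg E2 v) => out_sum in_sum.
have [in1 in2] := in_bal v; have [out1 out2] := out_bal v.
by split; apply: leq_add; apply: ceil_div_half_le; lia.
Qed.

Lemma OEC_palette_le A h phi p K :
  OEC A h phi p -> (forall v, ceil_degree A (2 ^ h) v <= K) -> p <= 2 ^ h * K.+1.
Proof.
elim=> {A h phi p} [A phi _ _ | A E1 E2 h phi1 phi2 p1 p2 split_A _ IH1 _ IH2] le_K.
  by rewrite mul1n addn1 ltnS maxdeg_le_ceil_degree1.
have split_le v := splitting_ceil_degree_le v (pow2_gt0 h) split_A.
rewrite expnS in le_K *; rewrite -mulnA mul2n -addnn.
by apply: leq_add; [apply: IH1 | apply: IH2] => v;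
  apply: leq_trans (le_K v); case: (split_le v).
Qed.

Lemma OEC_color_range A h phi p :
  OEC A h phi p -> forall a, a \in A -> 1 <= phi a <= p.
Proof.
elim=> {A h phi p} [// | A E1 E2 h phi1 phi2 p1 p2 [<- _ _ _] _ range1 _ range2] a.
rewrite in_setU; case: ifP => [a_E1 _ | _ /= a_E2].
- by have := range1 a a_E1; lia.
- by have := range2 a a_E2; lia.
Qed.

Lemma OEC_proper A h phi p : OEC A h phi p -> proper_coloring A phi.
Proof.
elim=> {A h phi p} // A E1 E2 h phi1 phi2 p1 p2 [<- _ _ _] OEC1 proper1 OEC2 proper2.
move=> a b; rewrite !in_setU /= => a_E b_E ab shared.
have range1 := OEC_color_range OEC1; have range2 := OEC_color_range OEC2.
case a_E1 : (a \in E1) in a_E *; case b_E1 : (b \in E1) in b_E *.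
- exact: proper1.
- by have := range1 a a_E1; have := range2 b b_E; lia.
- by have := range2 a a_E; have := range1 b b_E1; lia.
- by rewrite eqn_add2l; apply: proper2.
Qed.

Lemma indeg_arcs (mu : rel V) v : indeg (arcs mu) v = #|[set u | mu u v]|.
Proof.
rewrite -(card_imset _ (fun u w (e : (u, v) = (w, v)) => congr1 fst e)).
apply: eq_card => -[u w]; rewrite !inE /=; apply/andP/imsetP => [[mu_uw /eqP<-] | [x]].
  by exists u; rewrite ?inE.
by rewrite inE => mu_xv [-> ->].
Qed.

Lemma outdeg_arcs (mu : rel V) v : outdeg (arcs mu) v = #|[set u | mu v u]|.
Proof.
rewrite -(card_imset _ (fun u w (e : (v, u) = (v, w)) => congr1 snd e)).
apply: eq_card => -[u w]; rewrite !inE /=; apply/andP/imsetP => [[mu_vw /eqP<-] | [x]].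
  by exists w; rewrite ?inE.
by rewrite inE => mu_vx [-> ->].
Qed.

Lemma indeg_outdeg_arcs_le (G mu : rel V) v :
  symmetric G -> orientation_of G mu ->
  indeg (arcs mu) v + outdeg (arcs mu) v <= #|[set u | G v u]|.
Proof.
move=> G_sym [mu_G [_ mu_asym]]; rewrite indeg_arcs outdeg_arcs -cardsUI.
have -> : [set u | mu u v] :&: [set u | mu v u] = set0.
  by apply/setP => u; rewrite !inE; apply/negP => /andP[/mu_asym/negP].
rewrite cards0 addn0; apply: subset_leq_card; apply/subsetP => u.
by rewrite !inE => /orP[/mu_G | /mu_G]; rewrite 1?G_sym.
Qed.

End OrientedEdgeColoring.

Theorem lemma4p11 (V : finType) (G mu : rel V) (h : nat) :
  simple_graph G ->
  orientation_of G mu ->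
  (forall v : V, #|[set u | mu v u]| <= 2 * arboricity G) ->
  2 ^ h <= arboricity G ->
  forall (phi : V * V -> nat) (p : nat),
    OEC (arcs mu) h phi p ->
    proper_coloring (arcs mu) phi /\
    (forall a, a \in arcs mu -> 1 <= phi a <= max_degree G + 3 * 2 ^ h).
Proof.
move=> [G_sym _] mu_orient _ _ phi p OEC_mu.
split; first exact: OEC_proper OEC_mu.
set D := max_degree G; set d := 2 ^ h; have d_gt0 : 0 < d := pow2_gt0 h.
have le_D v : indeg (arcs mu) v + outdeg (arcs mu) v <= D.
  apply: leq_trans (indeg_outdeg_arcs_le v G_sym mu_orient) _.
  exact: (@leq_bigmax _ (fun w => #|[set u | G w u]|) v).
have ceil_degree_le v : ceil_degree (arcs mu) d v <= (ceil_div D d).+1.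
  apply: leq_trans (ceil_divD_le d_gt0 _ _) _; rewrite ltnS.
  exact: (leq_ceil_div2r d_gt0 (le_D v)).
have p_le := OEC_palette_le OEC_mu ceil_degree_le.
have ceil_D := ltn_mul_ceil_div d_gt0 D.
by move=> a a_mu; have := OEC_color_range OEC_mu a_mu; lia.
Qed.
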